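(* Let $(X,\mathcal{M})$ be a measurable space, $\Sigma$ a compact Hausdorff group with Haar probability measure $\mu_\Sigma$ acting measurably on $X$ via $T_\sigma$, and let $\Gamma\subset\mathcal{M}_b(X)$ satisfy $S_\Sigma[\Gamma]\subset\Gamma$. Then for all $P,Q\in\mathcal{P}(X)$ (not necessarily $\Sigma$-invariant), $D_f^{\Gamma^{\mathrm{inv}}_\Sigma}(Q\|P)=D_f^\Gamma(S^\Sigma[Q]\|S^\Sigma[P])$ and $W^{\Gamma^{\mathrm{inv}}_\Sigma}(Q,P)=W^\Gamma(S^\Sigma[Q],S^\Sigma[P])$.
   Context: $S_\Sigma[\gamma](x)=\int_\Sigma\gamma(T_\sigma(x))\mu_\Sigma(d\sigma)$; $S^\Sigma[P]$ is the probability measure with $E_{S^\Sigma[P]}[\gamma]=E_P[S_\Sigma[\gamma]]$ for $\gamma\in\mathcal{M}_b(X)$. $\Gamma^{\mathrm{inv}}_\Sigma=\{\gamma\in\Gamma:\gamma\circ T_\sigma=\gamma\ \forall\sigma\}$. $f:[0,\infty)\to\mathbb{R}$ convex, lower semicontinuous, $f(1)=0$, strictly convex at $1$, with Legendre transform $f^*$; $D_f^\Gamma(Q\|P)=\sup_{\gamma\in\Gamma}\{E_Q[\gamma]-\inf_{\nu\in\mathbb{R}}(\nu+E_P[f^*(\gamma-\nu)])\}$; $W^\Gamma(Q,P)=\sup_{\gamma\in\Gamma}\{E_Q[\gamma]-E_P[\gamma]\}$. *)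

From HB Require Import structures.
From mathcomp Require Import all_boot all_order all_algebra.
From mathcomp Require Import all_classical all_reals all_analysis.

Set Implicit Arguments.
Unset Strict Implicit.
Unset Printing Implicit Defensive.

Import Order.TTheory GRing.Theory Num.Theory.
Import numFieldNormedType.Exports.

Local Open Scope classical_set_scope.
Local Open Scope ring_scope.

Definition borel_of (G : ptopologicalType) := g_sigma_algebraType (@open G).

Definition compact_hausdorff_group (G : ptopologicalType)
  (mul : G -> G -> G) (inv : G -> G) (one : G) : Prop :=
  (forall a b c, mul a (mul b c) = mul (mul a b) c) /\
  (forall a, mul one a = a /\ mul a one = a) /\
  (forall a, mul (inv a) a = one /\ mul a (inv a) = one) /\
  continuous (fun p : G * G => mul p.1 p.2) /\
  continuous inv /\
  hausdorff_space G /\ compact [set: G].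

(** mu is the Haar probability measure: a Borel probability measure which is
    invariant under left and right translations (for a compact group the Haar
    measure is bi-invariant). *)
Definition haar_probability (R : realType) (G : ptopologicalType)
  (mul : G -> G -> G) (mu : probability (borel_of G) R) : Prop :=
  forall (g : G) (A : set (borel_of G)), measurable A ->
    mu (mul g @` A) = mu A /\ mu ((fun s => mul s g) @` A) = mu A.

Definition measurable_action (G : ptopologicalType) (mul : G -> G -> G)
  (one : G) d (X : measurableType d) (T : G -> X -> X) : Prop :=
  [/\ (forall x, T one x = x),
      (forall s t x, T (mul s t) x = T s (T t x)) &
      measurable_fun setT (fun p : borel_of G * X => T p.1 p.2)].

Definition Mb d (X : measurableType d) (R : realType) : set (X -> R) :=
  [set g : X -> R | measurable_fun setT g /\ exists M : R, forall x, `|g x| <= M].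

Definition Ssym (R : realType) (G : ptopologicalType)
  (mu : probability (borel_of G) R) d (X : measurableType d)
  (T : G -> X -> X) (g : X -> R) : X -> R :=
  fun x => fine (\int[mu]_s (g (T s x))%:E)%E.

Definition Gamma_inv (G : Type) (X : Type) (R : Type) (T : G -> X -> X)
  (Gamma : set (X -> R)) : set (X -> R) :=
  [set g | Gamma g /\ forall s, g \o T s = g].

Definition expect d (X : measurableType d) (R : realType)
  (P : probability X R) (g : X -> R) : \bar R := (\int[P]_x (g x)%:E)%E.

Definition legendre (R : realType) (f : R -> R) (y : R) : \bar R :=
  ereal_sup [set (t * y - f t)%:E | t in [set t : R | 0 <= t]].

(** Assumptions on f : [0,oo) -> R (only its values on [0,oo) matter). *)
Definition convex_nonneg (R : realType) (f : R -> R) : Prop :=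
  forall x y t : R, 0 <= x -> 0 <= y -> 0 <= t -> t <= 1 ->
    f (t * x + (1 - t) * y) <= t * f x + (1 - t) * f y.

Definition lsc_nonneg (R : realType) (f : R -> R) : Prop :=
  forall x : R, 0 <= x -> forall e : R, 0 < e ->
    exists2 del : R, 0 < del &
      forall y : R, 0 <= y -> `|y - x| < del -> f x - e < f y.

Definition strictly_convex_at_1 (R : realType) (f : R -> R) : Prop :=
  forall x y t : R, 0 <= x -> 0 <= y -> 0 < t -> t < 1 -> x != y ->
    t * x + (1 - t) * y = 1 -> f 1 < t * f x + (1 - t) * f y.

Definition Df_Gamma d (X : measurableType d) (R : realType) (f : R -> R)
  (Gamma : set (X -> R)) (Q P : probability X R) : \bar R :=
  ereal_sup [set (expect Q g -
     ereal_inf [set (nu%:E + \int[P]_x legendre f (g x - nu))%E | nu in [set: R]])%E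
   | g in Gamma].

Definition W_Gamma d (X : measurableType d) (R : realType)
  (Gamma : set (X -> R)) (Q P : probability X R) : \bar R :=
  ereal_sup [set (expect Q g - expect P g)%E | g in Gamma].

From HB Require Import structures.
From mathcomp Require Import all_boot all_order all_algebra.
From mathcomp Require Import all_classical all_reals all_analysis.
From mathcomp Require Import measurable_realfun ring.

Set Implicit Arguments.
Unset Strict Implicit.
Unset Printing Implicit Defensive.

Import Order.TTheory GRing.Theory Num.Theory.
Import numFieldNormedType.Exports.
Local Open Scope classical_set_scope.
Local Open Scope ring_scope.

(* Let [S] be [Ssym mu T].  Right invariance of the Haar measure makes every
   [S g] invariant, and [S] fixes invariant functions.  By Fubini, the
   identity [E_SP[g] = E_P[S g]] for bounded [g] identifies [SP] with the
   image of [mu \x P] under [(s, x) |-> T s x], so that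
   [E_SP[h] = E_P[x |-> int h (T s x) dmu(s)]] for every measurable [h >= 0];
   as [f^* >= - f 0], this covers [f^*(g - nu)].  Hence for invariant [g] each
   term of the variational formulas is the same for [(Q, P)] and [(SQ, SP)],
   while for [g] in [Gamma] the invariant candidate [S g] does at least as
   well for [(Q, P)] as [g] does for [(SQ, SP)]: the expectations agree, and
   [f^*(S g - nu) <= S[f^*(g - nu)]] by Jensen, [f^*] being a supremum of
   affine functions.  No property of [f] is needed. *)

Section ereal_sup_inf.
Local Open Scope ereal_scope.
Context (R : realType).

Lemma le_ereal_sup_image (A B : Type) (SA : set A) (SB : set B)
    (F : A -> \bar R) (F' : B -> \bar R) :
  (forall a, SA a -> exists2 b, SB b & F a <= F' b) ->
  ereal_sup (F @` SA) <= ereal_sup (F' @` SB).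
Proof.
move=> FF'; apply: ge_ereal_sup => _ [a /FF'[b SBb le_ab] <-].
by apply: le_ereal_sup_tmp; exists (F' b) => //; exists b.
Qed.

Lemma le_ereal_inf_image (A : Type) (S : set A) (F F' : A -> \bar R) :
  (forall a, S a -> F a <= F' a) -> ereal_inf (F @` S) <= ereal_inf (F' @` S).
Proof.
move=> FF'; apply: le_ereal_inf_tmp => _ [a Sa <-].
by apply: ge_ereal_inf; exists (F a); [exists a | exact: FF'].
Qed.

End ereal_sup_inf.

Section integral_probability.
Local Open Scope ereal_scope.
Context (R : realType) d (Y : measurableType d).

Lemma Mb_integrable (m : {finite_measure set Y -> \bar R}) (h : Y -> R) :
  Mb h -> m.-integrable setT (EFin \o h).
Proof.
move=> [mh [M hM]]; apply: (@le_integrable _ _ _ _ _ _ _ (EFin \o cst M)) => //.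
- exact/measurable_EFinP.
- by move=> y _ /=; rewrite lee_fin (le_trans (hM y)) ?ler_norm.
- exact: finite_measure_integrable_cst.
Qed.

Lemma Mb_integral_fin_num (m : {finite_measure set Y -> \bar R}) (h : Y -> R) :
  Mb h -> \int[m]_y (h y)%:E \is a fin_num.
Proof. by move=> /(Mb_integrable m)/integrable_fin_num; apply. Qed.

Lemma probability_integral_cst (m : probability Y R) (r : \bar R) :
  \int[m]_y r = r.
Proof. by rewrite integral_cst// [X in _ * X]probability_setT mule1. Qed.

Lemma integral_shiftE (m : probability Y R) (h : Y -> \bar R) (c : R) :
  (0 <= c)%R -> measurable_fun setT h -> (forall y, - c%:E <= h y) ->
  \int[m]_y h y = \int[m]_y (h y + c%:E) - c%:E.
Proof.
move=> c0 mh hc.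
have hNc y : h^\- y <= c%:E.
  by rewrite funenegE ge_max lee_fin c0 andbT leeNl.
have hN_int : m.-integrable setT h^\-.
  apply: (@le_integrable _ _ _ _ _ _ _ (EFin \o cst c)) => //.
  - exact: measurable_funeneg.
  - by move=> y _ /=; rewrite gee0_abs ?funeneg_ge0// ger0_norm.
  - exact: finite_measure_integrable_cst.
have -> : (fun y => h y + c%:E) = (fun y => h^\+ y + (c%:E - h^\- y)).
  by apply/funext => y; rewrite [in LHS](funeposneg h) addeAC addeA.
rewrite ge0_integralD//; last 3 first.
- exact: measurable_funepos.
- by move=> y _; rewrite subre_ge0 ?hNc.
- exact: emeasurable_funB (measurable_funeneg mh).
rewrite -[\int[m]_y (c%:E - _)]/(\int[m]_y (cst c%:E \- h^\-) y).
rewrite integralB//; last exact: finite_measure_integrable_cst.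
have hN_fin : \int[m]_y h^\- y \is a fin_num by exact: integrable_fin_num.
by rewrite probability_integral_cst [LHS]integralE addeA addeAC addeK.
Qed.

End integral_probability.

Section legendre.
Local Open Scope ereal_scope.
Context (R : realType) (f : R -> R).

Lemma legendre_ge y t : (0 <= t)%R -> (t * y - f t)%:E <= legendre f y.
Proof. by move=> t0; apply: ereal_sup_ubound; exists t. Qed.

Lemma legendre_ge_Nnorm y : - `|f 0|%:E <= legendre f y.
Proof.
have := legendre_ge y (lexx (0%R : R)); rewrite mul0r sub0r; apply: le_trans.
by rewrite EFinN leeN2 lee_fin ler_norm.
Qed.

Lemma legendre_shift_ge0 y : 0 <= legendre f y + `|f 0|%:E.
Proof. by rewrite -leeBlDr// sub0e legendre_ge_Nnorm. Qed.

Lemma legendre_nondecreasing x y : (x <= y)%R -> legendre f x <= legendre f y.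
Proof.
move=> xy; apply: ge_ereal_sup => _ [t t0 <-]; apply: le_trans (legendre_ge y t0).
by rewrite lee_fin lerB// ler_wpM2l.
Qed.

Lemma measurable_legendre : measurable_fun setT (legendre f).
Proof.
apply: (measurability _ (ErealGenCInfty.measurableE R)) => //.
move=> /= _ [_ [r ->] <-]; apply: measurableI => //.
apply: is_interval_measurable => s t /=.
rewrite !in_itv/= !andbT => fs ft u /andP[su ut].
by rewrite in_itv/= andbT (le_trans fs)// legendre_nondecreasing.
Qed.

Lemma measurable_legendreB d (Y : measurableType d) (g : Y -> R) nu :
  measurable_fun setT g -> measurable_fun setT (fun y => legendre f (g y - nu)).
Proof.
move=> mg; apply: measurableT_comp measurable_legendre _.
exact: measurable_funB.
Qed.

Lemma legendre_jensen d (Y : measurableType d) (m : probability Y R)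
    (a : Y -> R) nu : Mb a ->
  legendre f (fine (\int[m]_y (a y)%:E) - nu) + `|f 0|%:E
    <= \int[m]_y (legendre f (a y - nu) + `|f 0|%:E).
Proof.
move=> Mba; set c := `|f 0|%R; rewrite -leeBrDr//.
apply: ge_ereal_sup => _ [t t0 <-]; rewrite leeBrDr// -EFinD.
pose k := (- (t * nu) - f t + c)%R.
pose b y := (t * a y + k)%R.
have bE : EFin \o b = (fun y => t%:E * (a y)%:E + k%:E).
  by apply/funext => y; rewrite /= EFinD EFinM.
have ta_int : m.-integrable setT (fun y => t%:E * (a y)%:E).
  exact/integrableZl/Mb_integrable.
have k_int : m.-integrable setT (cst k%:E).
  exact: finite_measure_integrable_cst.
have b_int : m.-integrable setT (EFin \o b).
  by rewrite bE; exact: (integrableD _ ta_int k_int).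
have -> : (t * (fine (\int[m]_y (a y)%:E) - nu) - f t + c)%:E
    = \int[m]_y (b y)%:E.
  rewrite -[fun y => (b y)%:E]/(EFin \o b) bE integralD// integralZl//.
  2: exact: Mb_integrable.
  rewrite probability_integral_cst.
  rewrite -[X in (t%:E * X)%E]fineK ?Mb_integral_fin_num//.
  by congr (_%:E); rewrite /k; ring.
apply: (@le_trans _ _ (\int[m]_y ((EFin \o b)^\+ y))).
  apply: le_integral => //; first exact: integrable_funepos.
  by move=> y _; rewrite funeposE le_max lexx.
apply: ge0_le_integral => //.
- exact/measurable_funepos/(measurable_int _ b_int).
- by apply: emeasurable_funD => //; apply: measurable_legendreB; case: Mba.
- move=> y _; rewrite funeposE ge_max legendre_shift_ge0 andbT /= /b /k.
  have -> : (t * a y + (- (t * nu) - f t + c) = t * (a y - nu) - f t + c)%R.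
    by ring.
  by rewrite EFinD leeD2r// legendre_ge.
Qed.

End legendre.

Section right_translation.
Context (G : ptopologicalType) (mul : G -> G -> G) (inv : G -> G) (one : G).
Hypothesis mulA : forall a b c, mul a (mul b c) = mul (mul a b) c.
Hypothesis mulg1 : forall a, mul a one = a.
Hypothesis mulVg : forall a, mul (inv a) a = one.
Hypothesis mulgV : forall a, mul a (inv a) = one.

Lemma preimage_mulr t (A : set G) :
  (fun s => mul s t) @^-1` A = (fun s => mul s (inv t)) @` A.
Proof.
apply/seteqP; split => [s As | _ [a Aa <-]] /=.
  by exists (mul s t) => //; rewrite -mulA mulgV mulg1.
by rewrite -mulA mulVg mulg1.
Qed.

Lemma haar_mulr_preimage (R : realType) (mu : probability (borel_of G) R) t
    (A : set (borel_of G)) :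
  haar_probability mul mu -> measurable A ->
  mu ((fun s => mul s t) @^-1` A) = mu A.
Proof.
by move=> haar mA; rewrite preimage_mulr; have [_ ->] := haar (inv t) A mA.
Qed.

Lemma continuous_mulr t :
  continuous (fun p : G * G => mul p.1 p.2) -> continuous (fun s => mul s t).
Proof.
move=> cmul s; apply: (@continuous2_cvg _ _ _ _ _ _ id (cst t) mul s t) => //.
- exact: (cmul (s, t)).
- exact: cvg_cst.
Qed.

End right_translation.

Lemma continuous_borel_measurable (G H : ptopologicalType) (h : G -> H) :
  continuous h -> measurable_fun setT (h : borel_of G -> borel_of H).
Proof.
move=> ch.
apply: (measurability _ (erefl : @measurable _ (borel_of H) = <<s open >>)) => //.
move=> _ [B oB <-]; apply: sub_sigma_algebra.
by rewrite setTI; move/continuousP : ch; apply.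
Qed.

Section symmetrization.
Local Open Scope ereal_scope.
Context (R : realType) d (X : measurableType d) (G : ptopologicalType)
  (mul : G -> G -> G) (mu : probability (borel_of G) R) (T : G -> X -> X).
Local Notation act := (fun p : borel_of G * X => T p.1 p.2).
Hypothesis measurable_act : measurable_fun setT act.
Hypothesis actM : forall s t x, T (mul s t) x = T s (T t x).
Hypothesis measurable_mulr :
  forall t, measurable_fun setT (fun s : borel_of G => (mul s t : borel_of G)).
Hypothesis mu_mulr : forall t (A : set (borel_of G)), measurable A ->
  mu ((fun s => mul s t) @^-1` A) = mu A.

Lemma measurable_orbit x : measurable_fun setT (fun s : borel_of G => T s x).
Proof. exact: measurable_fun_pair1 measurable_act. Qed.

Lemma Mb_orbit (g : X -> R) x : Mb g -> Mb (fun s : borel_of G => g (T s x)).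
Proof.
move=> [mg [M gM]]; split; last by exists M.
exact: measurableT_comp mg (measurable_orbit x).
Qed.

Lemma SsymE (g : X -> R) x :
  Mb g -> (Ssym mu T g x)%:E = \int[mu]_s (g (T s x))%:E.
Proof. by move=> Mbg; rewrite fineK//; apply/Mb_integral_fin_num/Mb_orbit. Qed.

Lemma Ssym_id (g : X -> R) : (forall s, g \o T s = g) -> Ssym mu T g = g.
Proof.
move=> g_inv; apply/funext => x; rewrite /Ssym.
under eq_integral do rewrite -[g (T _ x)]/((g \o T _) x) g_inv.
by rewrite probability_integral_cst.
Qed.

Lemma Ssym_invariant (g : X -> R) t : Mb g -> Ssym mu T g \o T t = Ssym mu T g.
Proof.
move=> Mbg; apply/funext => x /=; rewrite /Ssym; congr fine.
have gTE : (fun s : borel_of G => (g (T s (T t x)))%:E)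
    = (fun s => (g (T s x))%:E) \o (fun s => mul s t).
  by apply/funext => s /=; rewrite actM.
transitivity
    (\int[pushforward mu (fun s : borel_of G => (mul s t : borel_of G))]_s
      (g (T s x))%:E).
  2: by apply: eq_measure_integral => A mA _; exact: mu_mulr.
rewrite gTE integral_pushforward//.
- by apply/measurable_EFinP; case: (Mb_orbit x Mbg).
- by rewrite preimage_setT -gTE; exact/Mb_integrable/Mb_orbit.
Qed.

Section symmetrized_measure.
Variables (P SP : probability X R).
Hypothesis SPE : forall g, Mb g -> expect SP g = expect P (Ssym mu T g).

Lemma expect_symmetrized_invariant (g : X -> R) :
  Mb g -> (forall s, g \o T s = g) -> expect SP g = expect P g.
Proof. by move=> Mbg g_inv; rewrite SPE// Ssym_id. Qed.

Lemma symmetrized_measureE (A : set X) : measurable A ->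
  SP A = pushforward (mu \x P) act A.
Proof.
move=> mA; have Mb1A : Mb (\1_A : X -> R).
  split; first exact: measurable_indic.
  by exists 1%R => x; rewrite indicE; case: (x \in A); rewrite ?normr1 ?normr0.
have mactA : measurable (act @^-1` A).
  by rewrite -[_ @^-1` A]setTI; exact: measurable_act.
rewrite -[A in SP A]setIT -integral_indic// -/(expect SP _) SPE//.
rewrite /pushforward -[X in _ = (mu \x P) X]setIT -integral_indic//.
rewrite fubini_tonelli2//; last exact/measurable_EFinP/measurable_indic.
by apply: eq_integral => x _; rewrite SsymE.
Qed.

Lemma ge0_integral_symmetrized (h : X -> \bar R) :
  measurable_fun setT h -> (forall x, 0 <= h x) ->
  \int[SP]_x h x = \int[P]_x \int[mu]_s h (T s x).
Proof.
move=> mh h0.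
rewrite (eq_measure_integral (pushforward (mu \x P) act)); last first.
  by move=> A mA _; exact: symmetrized_measureE.
rewrite ge0_integral_pushforward// preimage_setT fubini_tonelli2//.
- exact: measurableT_comp mh measurable_act.
- by move=> p; exact: h0.
Qed.

Lemma integral_legendre_invariant (f : R -> R) (g : X -> R) nu :
  Mb g -> (forall s, g \o T s = g) ->
  \int[SP]_x legendre f (g x - nu) = \int[P]_x legendre f (g x - nu).
Proof.
move=> [mg _] g_inv; have mfg := measurable_legendreB f nu mg.
rewrite !(integral_shiftE _ (normr_ge0 _) mfg (fun=> legendre_ge_Nnorm f _)).
congr (_ - _).
rewrite ge0_integral_symmetrized; last 2 first.
- exact: emeasurable_funD.
- by move=> x; exact: legendre_shift_ge0.
apply: eq_integral => x _.
under eq_integral do rewrite -[g (T _ x)]/((g \o T _) x) g_inv.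
by rewrite probability_integral_cst.
Qed.

Lemma integral_legendre_Ssym_le (f : R -> R) (g : X -> R) nu :
  Mb g -> measurable_fun setT (Ssym mu T g) ->
  \int[P]_x legendre f (Ssym mu T g x - nu) <= \int[SP]_x legendre f (g x - nu).
Proof.
move=> Mbg mSg; have mfg := measurable_legendreB f nu Mbg.1.
have mfSg := measurable_legendreB f nu mSg.
rewrite (integral_shiftE _ (normr_ge0 _) mfg (fun=> legendre_ge_Nnorm f _)).
rewrite (integral_shiftE _ (normr_ge0 _) mfSg (fun=> legendre_ge_Nnorm f _)).
rewrite leeD2r//.
have mH : measurable_fun setT
    (fun p : borel_of G * X => legendre f (g (T p.1 p.2) - nu) + `|f 0|%:E).
  by apply: emeasurable_funD => //; exact: measurableT_comp mfg measurable_act.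
rewrite ge0_integral_symmetrized; last 2 first.
- exact: emeasurable_funD.
- by move=> x; exact: legendre_shift_ge0.
apply: ge0_le_integral => //.
- by move=> x _; exact: legendre_shift_ge0.
- by apply: emeasurable_funD.
- exact: (measurable_fun_fubini_tonelli_G _ mH (fun p => legendre_shift_ge0 _ _)).
- by move=> x _; exact: (legendre_jensen f mu nu (Mb_orbit x Mbg)).
Qed.

End symmetrized_measure.

Section variational_formulas.
Variable Gamma : set (X -> R).
Hypothesis Gamma_Mb : Gamma `<=` @Mb _ X R.
Hypothesis Gamma_Ssym : forall g, Gamma g -> Gamma (Ssym mu T g).
Variables (Q P SQ SP : probability X R).
Hypothesis SQE : forall g, Mb g -> expect SQ g = expect Q (Ssym mu T g).
Hypothesis SPE : forall g, Mb g -> expect SP g = expect P (Ssym mu T g).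

Lemma Gamma_inv_Ssym g : Gamma g -> Gamma_inv T Gamma (Ssym mu T g).
Proof.
move=> Gg; split; first exact: Gamma_Ssym.
by move=> s; exact/Ssym_invariant/Gamma_Mb.
Qed.

Lemma W_Gamma_symmetrized :
  W_Gamma (Gamma_inv T Gamma) Q P = W_Gamma Gamma SQ SP.
Proof.
apply/eqP; rewrite eq_le; apply/andP; split; apply: le_ereal_sup_image.
- move=> g [Gg g_inv]; exists g => //.
  rewrite (expect_symmetrized_invariant SQE (Gamma_Mb Gg) g_inv).
  by rewrite (expect_symmetrized_invariant SPE (Gamma_Mb Gg) g_inv).
- move=> g Gg; exists (Ssym mu T g); first exact: Gamma_inv_Ssym.
  by rewrite SQE ?SPE//; exact: Gamma_Mb.
Qed.

Lemma Df_Gamma_symmetrized f :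
  Df_Gamma f (Gamma_inv T Gamma) Q P = Df_Gamma f Gamma SQ SP.
Proof.
apply/eqP; rewrite eq_le; apply/andP; split; apply: le_ereal_sup_image.
- move=> g [Gg g_inv]; exists g => //.
  rewrite (expect_symmetrized_invariant SQE (Gamma_Mb Gg) g_inv).
  by under eq_imagel => nu _ do
    rewrite -(integral_legendre_invariant SPE _ _ (Gamma_Mb Gg) g_inv).
- move=> g Gg; exists (Ssym mu T g); first exact: Gamma_inv_Ssym.
  rewrite SQE; last exact: Gamma_Mb.
  apply: leeB => //; apply: le_ereal_inf_image => nu _; rewrite leeD2l//.
  apply: integral_legendre_Ssym_le SPE _ _ _ (Gamma_Mb Gg) _.
  exact: (Gamma_Mb (Gamma_Ssym Gg)).1.
Qed.

End variational_formulas.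

End symmetrization.

Theorem theorem4 (R : realType) (d : measure_display) (X : measurableType d)
  (G : ptopologicalType) (mul : G -> G -> G) (inv : G -> G) (one : G)
  (mu : probability (borel_of G) R) (T : G -> X -> X)
  (f : R -> R) (Gamma : set (X -> R)) :
  compact_hausdorff_group mul inv one ->
  haar_probability mul mu ->
  measurable_action mul one T ->
  convex_nonneg f -> lsc_nonneg f -> f 1 = 0 -> strictly_convex_at_1 f ->
  Gamma `<=` @Mb _ X R ->
  (forall g, Gamma g -> Gamma (Ssym mu T g)) ->
  forall (Q P SQ SP : probability X R),
    (forall g, @Mb _ X R g -> expect SQ g = expect Q (Ssym mu T g)) ->
    (forall g, @Mb _ X R g -> expect SP g = expect P (Ssym mu T g)) ->
    Df_Gamma f (Gamma_inv T Gamma) Q P = Df_Gamma f Gamma SQ SP /\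
    W_Gamma (Gamma_inv T Gamma) Q P = W_Gamma Gamma SQ SP.
Proof.
move=> [mulA [mul1 [mulV [cmul _]]]] haar [_ actM measurable_act] _ _ _ _.
move=> Gamma_Mb Gamma_Ssym Q P SQ SP SQE SPE.
have mulg1 a : mul a one = a by have [] := mul1 a.
have mulVg a : mul (inv a) a = one by have [] := mulV a.
have mulgV a : mul a (inv a) = one by have [] := mulV a.
have measurable_mulr t :
    measurable_fun setT (fun s : borel_of G => (mul s t : borel_of G)).
  exact: continuous_borel_measurable (continuous_mulr cmul).
have mu_mulr t (A : set (borel_of G)) :
    measurable A -> mu ((fun s => mul s t) @^-1` A) = mu A.
  exact: haar_mulr_preimage.
split.
- exact: (Df_Gamma_symmetrized measurable_act actM measurable_mulr mu_mulr
    Gamma_Mb Gamma_Ssym SQE SPE f).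
- exact: (W_Gamma_symmetrized measurable_act actM measurable_mulr mu_mulr
    Gamma_Mb Gamma_Ssym SQE SPE).
Qed.
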